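(* For every integer $r\geq 9$, the Coxeter polynomial of the Nakayama algebra $N_{r+7}(r)$ is $$\chi_{(r+7,r)}(\lambda)=(\lambda+1)(\lambda^6-\lambda^3+1)(\lambda^r+1).$$ Consequently, the Coxeter number of $N_{r+7}(r)$ equals $\mathrm{lcm}(2r,9)$.
   Context: $N_n(r)$ is the path algebra over an algebraically closed field $k$ of the quiver $1\leftarrow2\leftarrow\cdots\leftarrow n$ modulo the ideal generated by all paths of length $r$. For a finite-dimensional algebra $\Lambda$ with indecomposable projectives $P(1),\dots,P(n)$, the Cartan matrix $C$ has entries $c_{ij}=\dim_k\mathrm{Hom}_\Lambda(P(i),P(j))$; the Coxeter matrix is $\phi_\Lambda=-C^{-t}C$; the Coxeter polynomial is $\det(\lambda E_n-\phi_\Lambda)$; the Coxeter number is the least $m\geq1$ with $\phi_\Lambda^m=E_n$ (identity matrix). *)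

From HB Require Import structures.
From mathcomp Require Import all_boot all_order all_algebra.
Set Implicit Arguments. Unset Strict Implicit. Unset Printing Implicit Defensive.
Import Order.TTheory GRing.Theory Num.Theory.
Local Open Scope ring_scope.

(* Cartan matrix of the Nakayama algebra N_n(r) = k[1 <- 2 <- ... <- n]/(paths of length r).
   Vertices are indexed 0..n-1 (vertex i+1 of the paper is index i).
   c_ij = dim Hom(P(i),P(j)) = number of nonzero paths between the vertices,
   which is 1 iff i <= j < i + r, and 0 otherwise. The entries are integers
   (independent of the field k). *)
Definition nakayama_cartan (n r : nat) : 'M[int]_n :=
  \matrix_(i < n, j < n) (if (i <= j)%N && (j < i + r)%N then 1 else 0).

Definition coxeter_mx (n : nat) (C : 'M[int]_n) : 'M[int]_n :=
  - (invmx C^T *m C).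

Definition coxeter_poly (n : nat) (C : 'M[int]_n) : {poly int} :=
  char_poly (coxeter_mx C).

Definition is_coxeter_number (n : nat) (C : 'M[int]_n) (m : nat) : Prop :=
  [/\ (0 < m)%N, (coxeter_mx C) ^+ m = 1%:M
    & forall k : nat, (0 < k)%N -> (k < m)%N -> (coxeter_mx C) ^+ k <> 1%:M].

From HB Require Import structures.
From mathcomp Require Import all_boot all_order all_algebra.
From mathcomp Require Import zify ring.
Set Implicit Arguments. Unset Strict Implicit. Unset Printing Implicit Defensive.
Import GRing.Theory.
Local Open Scope ring_scope.

(* The Coxeter matrix Phi of N_(r+7)(r) is explicit: it is the solution of C^T Phi = -C.
   The vector u_0 = e_r - e_0 has a Phi-orbit u_0, ..., u_(r-1) with u_0 Phi^r = -u_0, and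
   w_0 = e_3 + e_4 + e_(r+5) + e_(r+6) has a Phi-orbit w_0, ..., w_6 with
   w_0 Phi^7 = -w_0 - w_1 + w_3 + w_4 - w_6.  So the matrix B with these r + 7 rows satisfies
   B Phi = T B for T = diag(A, D), where A and D are the companion matrices of X^r + 1 and of
   (X + 1)(X^6 - X^3 + 1) = X^7 + X^6 - X^4 - X^3 + X + 1.  Since det B <> 0, Phi and T have
   the same characteristic polynomial and Phi^m = 1 iff A^m = 1 and D^m = 1.  By
   Cayley-Hamilton A^r = -1, and D^9 = -1 because X^9 + 1 = (X^7 + ... + 1)(X^2 - X + 1); the
   first row of the powers of a companion matrix then shows that A and D have orders exactly
   2r and 18, so the Coxeter number is lcm(2r, 18) = lcm(2r, 9). *)

Section Companion.
Variable R : comNzRingType.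

(* [companionmx] with the dimension given explicitly instead of as [(size p).-1], which
   avoids casts. *)
Definition companion n (p : {poly R}) : 'M[R]_n :=
  \matrix_(i, j) if i == n.-1 :> nat then - p`_j else (i.+1 == j :> nat)%:R.

Lemma char_poly_castmx m n (e : m = n) (M : 'M[R]_m) :
  char_poly (castmx (e, e) M) = char_poly M.
Proof. by case: n / e; rewrite castmx_id. Qed.

Lemma char_poly_companion n (p : {poly R}) :
  p \is monic -> size p = n.+1 -> char_poly (companion n p) = p.
Proof.
move=> p_monic sz_p; have e : (size p).-1 = n by rewrite sz_p.
suff -> : companion n p = castmx (e, e) (companionmx p).
  by rewrite char_poly_castmx companionmxK.
by apply/matrixP => i j; rewrite castmxE !mxE /= e.
Qed.

Lemma companion_exp_entry n (p : {poly R}) s (i j : 'I_n) :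
  i = 0%N :> nat -> (s < n)%N -> (companion n p ^+ s) i j = (s == j :> nat)%:R.
Proof.
move=> i0; elim: s j => [|s IHs] j lt_sn; first by rewrite expr0 !mxE -val_eqE /= i0.
have le_sn := ltnW lt_sn.
rewrite exprSr mxE (bigD1 (Ordinal le_sn)) //= IHs // eqxx mul1r big1 ?addr0.
  by rewrite !mxE /= ifF //; apply/negbTE; lia.
by move=> l; rewrite IHs // -val_eqE /= eq_sym => /negPf->; rewrite mul0r.
Qed.

Lemma row_companion_mul n m (p : {poly R}) (X : 'M[R]_(n, m)) (i i' : 'I_n) :
  i' = i.+1 :> nat -> row i (companion n p *m X) = row i' X.
Proof.
move=> i'E; have lt_in : (i.+1 < n)%N by rewrite -i'E.
apply/rowP => j; rewrite !mxE (bigD1 i') //= !mxE i'E eqxx ifF ?mul1r; last by apply/negbTE; lia.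
rewrite big1 ?addr0 // => l; rewrite !mxE -val_eqE /= i'E => /negPf ne_l.
by rewrite ifF ?(eq_sym i.+1) ?ne_l ?mul0r //; apply/negbTE; lia.
Qed.

End Companion.

Lemma exp_eqN1_of_char_poly_mul (R : comNzRingType) n (M : 'M[R]_n) k (f : {poly R}) :
  char_poly M * f = 'X^k + 1 -> M ^+ k = -1.
Proof.
case: n M => [|n] M charMf; first by apply/matrixP => [[]].
have := congr1 (horner_mx M) charMf.
rewrite rmorphM /= Cayley_Hamilton mul0r rmorphD rmorphXn /= horner_mx_X rmorph1.
by move/eqP; rewrite eq_sym addr_eq0 => /eqP.
Qed.

Section NegOneRoot.
Variables (R : nzRingType) (n k : nat) (M : 'M[R]_n) (i0 : 'I_n).
Hypotheses (one_neqN1 : (1 : R) != -1) (MkN1 : M ^+ k = -1) (k_lt : (k < 2 * n)%N).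
Hypothesis M_diag0 : forall s, (0 < s < n)%N -> (M ^+ s) i0 i0 = 0.

Let exp_neq_sign s (b : bool) : (0 < s < k)%N -> M ^+ s != (-1) ^+ b.
Proof.
have small s' (b' : bool) : (0 < s' < n)%N -> M ^+ s' != (-1) ^+ b'.
  move=> s'_range; apply/eqP => /(congr1 (fun A : 'M_n => A i0 i0)).
  rewrite M_diag0 //; case: b' => /=; rewrite ?expr0 ?expr1 -?idmxE !mxE eqxx => /esym/eqP.
    by rewrite oppr_eq0 oner_eq0.
  by rewrite oner_eq0.
move=> s_range; have [lt_sn|le_ns] := ltnP s n; first by apply: small; lia.
(* M^s = (-1)^b with n <= s < k would give M^(k-s) = -(-1)^b with 0 < k - s < n. *)
apply/eqP => Ms; have /eqP := small (k - s)%N (~~ b) ltac:(lia); apply.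
have : M ^+ (k - s) * M ^+ s = -1 by rewrite -exprD subnK ?MkN1 //; lia.
rewrite Ms signrN => MksN.
by rewrite -[LHS]mulr1 -[in LHS](@sqrr_sign _ b) expr2 mulrA MksN mulN1r.
Qed.

Lemma exp_eq1_iff_of_exp_eqN1 m : M ^+ m = 1 <-> (2 * k %| m)%N.
Proof.
have k_gt0 : (0 < k)%N.
  case: k MkN1 => // /(congr1 (fun A : 'M_n => A i0 i0)); rewrite expr0 !mxE eqxx.
  by move/eqP; rewrite (negPf one_neqN1).
have Mqk q s : M ^+ (q * k + s) = (-1) ^+ q * M ^+ s by rewrite exprD mulnC exprM MkN1.
split=> [Mm1|/dvdnP[c ->]]; last first.
  by rewrite mulnC (mulnC 2%N) -mulnA exprM MkN1 exprM sqrrN !expr1n.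
have : M ^+ (m %% k)%N = (-1) ^+ (m %/ k)%N.
  have := Mqk (m %/ k)%N (m %% k)%N; rewrite -divn_eq Mm1.
  by move/(congr1 ( *%R ((-1) ^+ (m %/ k)%N))); rewrite mulr1 signrMK.
rewrite -signr_odd; have [s0|s_gt0] := posnP (m %% k)%N; last first.
  by move/eqP; rewrite (negPf (exp_neq_sign _ _)) // s_gt0 ltn_pmod.
case odd_q: (odd (m %/ k)%N); rewrite s0 expr0.
  move/(congr1 (fun A : 'M_n => A i0 i0)); rewrite expr1 -idmxE !mxE eqxx !mulr1n.
  by move/eqP; rewrite (negPf one_neqN1).
by rewrite (divn_eq m k) s0 addn0 dvdn_mul ?dvdn2 ?odd_q.
Qed.

End NegOneRoot.

Lemma char_poly_block_diag (R : comNzRingType) m n (A : 'M[R]_m) (D : 'M[R]_n) :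
  char_poly (block_mx A 0 0 D) = char_poly A * char_poly D.
Proof. by rewrite /char_poly char_block_diag_mx det_ublock. Qed.

Lemma exp_block_diag (R : pzRingType) m n (A : 'M[R]_m) (D : 'M[R]_n) k :
  block_mx A 0 0 D ^+ k = block_mx (A ^+ k) 0 0 (D ^+ k).
Proof.
elim: k => [|k IHk]; first by rewrite !expr0 -!idmxE -scalar_mx_block.
by rewrite !exprS IHk -!mulmxE mulmx_block !mulmx0 !mul0mx !add0r !addr0.
Qed.

Lemma block_diag_eq1 (R : pzRingType) m n (A : 'M[R]_m) (D : 'M[R]_n) :
  block_mx A 0 0 D = 1 <-> A = 1 /\ D = 1.
Proof.
rewrite -!idmxE scalar_mx_block; split=> [/eq_block_mx[-> _ _ ->] //|[-> ->] //].
Qed.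

Section Intertwining.
Variables (R : idomainType) (n : nat) (B M T : 'M[R]_n).
Hypotheses (BM_TB : B *m M = T *m B) (detB_neq0 : \det B != 0).

Lemma char_poly_intertwined : char_poly M = char_poly T.
Proof.
have hP : map_mx polyC B *m char_poly_mx M = char_poly_mx T *m map_mx polyC B.
  by rewrite /char_poly_mx mulmxBr mulmxBl -!map_mxM BM_TB mul_mx_scalar mul_scalar_mx.
have := congr1 determinant hP; rewrite !det_mulmx det_map_mx mulrC.
by apply: mulIf; rewrite polyC_eq0.
Qed.

Lemma exp_intertwined k : B *m M ^+ k = T ^+ k *m B.
Proof.
elim: k => [|k IHk]; first by rewrite !expr0 mulmx1 mul1mx.
by rewrite !exprSr -!mulmxE mulmxA IHk -mulmxA BM_TB mulmxA.
Qed.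

Lemma exp_eq1_intertwined k : M ^+ k = 1 <-> T ^+ k = 1.
Proof.
have adjBK (X Y : 'M[R]_n) : B *m X = Y *m B -> X = 1 <-> Y = 1.
  move=> BX_YB; split=> [X1|Y1].
    apply: (scalemx_inj detB_neq0); rewrite -!mul_mx_scalar -mul_mx_adj.
    by rewrite mulmxA -BX_YB X1 !mulmx1 !mul1mx.
  apply: (scalemx_inj detB_neq0); rewrite -!mul_scalar_mx -mul_adj_mx.
  by rewrite -mulmxA BX_YB Y1 !mul1mx !mulmx1.
exact: adjBK (exp_intertwined k).
Qed.

End Intertwining.

Lemma is_coxeter_number_of_exp_eq1 n (C : 'M[int]_n) m :
  (0 < m)%N -> (forall k, coxeter_mx C ^+ k = 1 <-> (m %| k)%N) ->
  is_coxeter_number C m.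
Proof.
move=> m_gt0 ordP; split=> [//||k k_gt0 lt_km]; first exact/ordP.
by move/ordP/(dvdn_leq k_gt0); rewrite leqNgt lt_km.
Qed.

Local Notation ind b := (if b then 1 else 0 : int).

Ltac case_lia := match goal with
  | |- context [if ?b then _ else _] =>
      let E := fresh "E" in case E: b; cbv iota beta; try (exfalso; lia); case_lia
  | _ => lia
  end.

(* Splitting first on the conditions free of [j] keeps the case trees small. *)
Ltac case_lia_free_of j := repeat match goal with
  | |- context [if ?b then _ else _] =>
      lazymatch b with context [j] => fail | _ =>
        let E := fresh "E" in case E: b; cbv iota beta; try (exfalso; lia) end
  end.

Lemma sum_mul_ind n (F : nat -> int) (a : nat) (c : bool) :
  \sum_(l < n) F l * ind ((l == a :> nat) && c) = if (a < n)%N && c then F a else 0.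
Proof.
case: c; last by rewrite andbF big1 // => l _; rewrite andbF mulr0.
rewrite andbT; under eq_bigr do rewrite andbT.
case: (ltnP a n) => [lt_an|le_na].
  rewrite (bigD1 (Ordinal lt_an)) //= eqxx mulr1 big1 ?addr0 // => l ne_la.
  by rewrite ifF ?mulr0 //; apply/negbTE; rewrite -val_eqE in ne_la.
by rewrite big1 // => l _; rewrite ifF ?mulr0 //; apply/negbTE; move: (ltn_ord l); lia.
Qed.

Lemma sum_ind_mul n (F : nat -> int) (a : nat) (c : bool) :
  \sum_(l < n) ind ((l == a :> nat) && c) * F l = if (a < n)%N && c then F a else 0.
Proof. by rewrite -sum_mul_ind; apply: eq_bigr => l _; rewrite mulrC. Qed.

Lemma sum_mul_indC n (F : nat -> int) (a : nat) (c : bool) :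
  \sum_(l < n) F l * ind (c && (l == a :> nat)) = if c && (a < n)%N then F a else 0.
Proof. by rewrite andbC -sum_mul_ind; apply: eq_bigr => l _; rewrite andbC. Qed.

Lemma natr_ind (b : bool) : (b%:R : int) = ind b.
Proof. by case: b. Qed.

Lemma mul_matrix_entry m n p (f g : nat -> nat -> int) (i : 'I_m) (k : 'I_p) :
  ((\matrix_(i0 < m, j0 < n) f i0 j0) *m (\matrix_(j0 < n, k0 < p) g j0 k0)) i k
  = \sum_(j < n) f i j * g j k.
Proof. by rewrite !mxE; apply: eq_bigr => j _; rewrite !mxE. Qed.

Definition qD : {poly int} := Poly [:: 1; 1; 0; -1; -1; 0; 1; 1].

Lemma qDE : qD = ('X + 1) * ('X^6 - 'X^3 + 1).
Proof. by rewrite /qD /Poly /= !cons_poly_def mul0r add0r !polyCN !polyC1 polyC0 addr0; ring. Qed.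

Lemma qD_monic : qD \is monic.
Proof. by rewrite monicE lead_coefE (@PolyK _ 0). Qed.

Lemma size_qD : size qD = 8%N.
Proof. by rewrite (@PolyK _ 0). Qed.

Definition mx7_of_seq (s : seq (seq int)) : 'M[int]_7 := \matrix_(i, j) (nth [::] s i)`_j.

Definition WQ : 'M[int]_7 := mx7_of_seq [:: [:: 0;0;0;0;1;0;1]; [:: 0;1;1;0;0;0;0];
  [:: 0;0;0;-1;0;-1;0]; [:: -1;0;0;0;-1;0;0]; [:: 1;0;1;0;1;0;1]; [:: -1;0;0;0;-1;-1;-1];
  [:: 1;0;0;0;0;0;1]].
Definition twice_inv_WQ : 'M[int]_7 := mx7_of_seq [:: [:: -1;0;0;-1;0;0;1]; [:: 1;2;0;-1;-2;0;1];
  [:: -1;0;0;1;2;0;-1]; [:: 1;0;-2;-1;0;2;1]; [:: 1;0;0;-1;0;0;-1]; [:: -1;0;0;1;0;-2;-1];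
  [:: 1;0;0;1;0;0;1]].

Lemma twice_inv_WQ_mul : twice_inv_WQ *m WQ = 2%:M.
Proof.
apply/matrixP => i j; rewrite !mxE !big_ord_recr big_ord0 /= !mxE /=.
by case: i => [[|[|[|[|[|[|[|i]]]]]]] hi] //; case: j => [[|[|[|[|[|[|[|j]]]]]]] hj].
Qed.

Lemma det_WQ_neq0 : \det WQ != 0.
Proof.
apply/eqP => det0; have := congr1 determinant twice_inv_WQ_mul.
by rewrite det_mulmx det0 mulr0 det_scalar.
Qed.

Section Nakayama.
Variable r : nat.
Hypothesis r_ge9 : (9 <= r)%N.

Local Notation C := (nakayama_cartan (r + 7) r).

(* The trivial [&& true] puts every summand in the shape expected by [sum_mul_ind]. *)
Definition coxeter_entry (l j : nat) : int :=
  ind ((l == j.+1)%N && (j.+1 < r)%N) + ind ((l == j + r.+1)%N && true)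
  - ind ((l == 0)%N && (j < r)%N) - ind ((l == r)%N && (j < r.-1)%N)
  - ind ((l == j.+1 - r)%N && (r <= j)%N).

Definition Phi : 'M[int]_(r + 7) := \matrix_(l, j) coxeter_entry l j.

Definition Phi_act (f : nat -> int) (j : nat) : int :=
    (if (j.+1 < r + 7)%N && (j.+1 < r)%N then f j.+1 else 0)
  + (if (j + r.+1 < r + 7)%N && true then f (j + r.+1)%N else 0)
  - (if (0 < r + 7)%N && (j < r)%N then f 0%N else 0)
  - (if (r < r + 7)%N && (j < r.-1)%N then f r else 0)
  - (if (j.+1 - r < r + 7)%N && (r <= j)%N then f (j.+1 - r)%N else 0).

Lemma sum_mul_coxeter_entry (f : nat -> int) j :
  \sum_(l < r + 7) f l * coxeter_entry l j = Phi_act f j.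
Proof.
under eq_bigr do rewrite !mulrBr mulrDr.
by rewrite !sumrB big_split /= !sum_mul_ind.
Qed.

Lemma cartan_tr_mul_Phi : C^T *m Phi = - C.
Proof.
apply/matrixP => i j; rewrite !mxE; under eq_bigr do rewrite !mxE.
rewrite (sum_mul_coxeter_entry (fun l => ind ((l <= i)%N && (i < l + r)%N))) /Phi_act.
by have := ltn_ord i; have := ltn_ord j; case_lia.
Qed.

Lemma coxeter_mx_nakayama : coxeter_mx C = Phi.
Proof.
have C_tr_unit : C^T \in unitmx.
  rewrite unitmxE det_trig; last by apply/is_trig_mxP => i j lt_ij; rewrite !mxE ifF //; lia.
  by rewrite big1 ?unitr1 // => i _; rewrite !mxE leqnn /= ifT //; lia.
by rewrite /coxeter_mx -[X in _ *m X]opprK -cartan_tr_mul_Phi mulmxN mulKmx ?opprK.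
Qed.

Definition vec (f : nat -> int) : 'rV[int]_(r + 7) := \row_(j < r + 7) f j.

Lemma eq_vec f g : (forall j, (j < r + 7)%N -> f j = g j) -> vec f = vec g.
Proof. by move=> eq_fg; apply/rowP => j; rewrite !mxE eq_fg. Qed.

Lemma vec_mul_Phi f : vec f *m Phi = vec (Phi_act f).
Proof.
apply/rowP => j; rewrite !mxE -sum_mul_coxeter_entry.
by apply: eq_bigr => l _; rewrite !mxE.
Qed.

Lemma row_vecs m (G : nat -> nat -> int) (k : 'I_m) :
  row k (\matrix_(k0 < m, j < r + 7) G k0 j) = vec (G k).
Proof. by apply/rowP => j; rewrite !mxE. Qed.

Definition u (k j : nat) : int :=
  if (k == 0)%N then ind (j == r)%N - ind (j == 0)%N
  else if (k <= r - 7)%N then ind (j == r - k)%N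
  else if (k == r - 6)%N then ind (j == 6)%N - ind (j == r + 6)%N
  else if (k == r - 5)%N then - ind (j == r + 5)%N
  else if (k == r - 4)%N then - ind (j == 4)%N
  else if (k == r - 3)%N then ind (j == r + 3)%N - ind (j == 3)%N
  else if (k == r - 2)%N then ind (j == r + 2)%N
  else ind (j == 1)%N.

Lemma u_mul_Phi k : (k.+1 < r)%N -> vec (u k) *m Phi = vec (u k.+1).
Proof.
move=> lt_kr; rewrite vec_mul_Phi; apply: eq_vec => j lt_j; rewrite /Phi_act /u.
by case_lia_free_of j; case_lia.
Qed.

Lemma u_last_mul_Phi : vec (u r.-1) *m Phi = - vec (u 0).
Proof.
rewrite vec_mul_Phi -scaleN1r; apply/rowP => j; rewrite !mxE /Phi_act /u.
by have := ltn_ord j; case_lia_free_of j; case_lia.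
Qed.

Definition w (k j : nat) : int :=
  if (k == 0)%N then ind (j == 3)%N + ind (j == 4)%N + ind (j == r + 5)%N + ind (j == r + 6)%N
  else if (k == 1)%N then ind ((2 <= j) && (j <= 5))%N - ind (j == r + 2)%N - ind (j == r + 3)%N
  else if (k == 2)%N then ind (j == 3)%N + ind (j == 4)%N - ind ((r + 1 <= j) && (j <= r + 4))%N
  else if (k == 3)%N then - ind (j <= 1)%N - ind (j == r + 2)%N - ind (j == r + 3)%N
  else if (k == 4)%N then ind ((3 <= j) && (j <= r))%N
  else if (k == 5)%N then - ind (j <= 1)%N - ind ((r + 2 <= j) && (j <= r + 6))%N
  else if (k == 6)%N then ind ((6 <= j) && (j <= r))%N
  else - ind (j <= 4)%N - ind (r + 5 <= j)%N.

Lemma w_mul_Phi k : (k < 7)%N -> vec (w k) *m Phi = vec (w k.+1).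
Proof.
move=> lt_k7; rewrite vec_mul_Phi; apply: eq_vec => j lt_j; rewrite /Phi_act.
by do 7 (case: k lt_k7 => [|k] lt_k7; [rewrite /w /=; case_lia|]).
Qed.

Lemma w7E j : (j < r + 7)%N -> w 7 j = - w 0 j - w 1 j + w 3 j + w 4 j - w 6 j.
Proof. by move=> lt_j; rewrite /w /=; case_lia. Qed.

Definition U : 'M[int]_(r, r + 7) := \matrix_(k, j) u k j.
Definition W : 'M[int]_(7, r + 7) := \matrix_(k, j) w k j.
Definition B : 'M[int]_(r + 7) := col_mx U W.
Definition A : 'M[int]_r := companion r ('X^r + 1).
Definition D : 'M[int]_7 := companion 7 qD.
Definition T : 'M[int]_(r + 7) := block_mx A 0 0 D.

Lemma U_mul_Phi : U *m Phi = A *m U.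
Proof.
apply/row_matrixP => k; rewrite row_mul row_vecs.
have [lt_kr|le_rk] := ltnP k.+1 r.
  by rewrite u_mul_Phi // (row_companion_mul _ _ (i' := Ordinal lt_kr)) // row_vecs.
have r_gt0 : (0 < r)%N by lia.
have kE : (k : nat) = r.-1 by move: (ltn_ord k); lia.
rewrite kE u_last_mul_Phi; apply/rowP => j; rewrite !mxE (bigD1 (Ordinal r_gt0)) //=.
rewrite big1 ?addr0 => [|l ne_l0]; rewrite !mxE kE eqxx coefD coefXn coef1.
  by rewrite /= [(0 == r)%N]eq_sym gtn_eqF // add0r mulN1r.
rewrite ltn_eqF // (_ : (l == 0 :> nat) = false) ?addr0 ?oppr0 ?mul0r //.
by apply/negbTE; rewrite -val_eqE in ne_l0.
Qed.

Lemma W_mul_Phi : W *m Phi = D *m W.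
Proof.
apply/row_matrixP => k; rewrite row_mul row_vecs w_mul_Phi //.
have [lt_k6|le_6k] := ltnP k.+1 7.
  by rewrite (row_companion_mul _ _ (i' := Ordinal lt_k6)) // row_vecs.
have kE : (k : nat) = 6%N by move: (ltn_ord k); lia.
apply/rowP => j; rewrite kE !mxE !big_ord_recr big_ord0 /= !mxE kE /= !coef_Poly /=.
by rewrite w7E //; ring.
Qed.

Lemma B_mul_Phi : B *m Phi = T *m B.
Proof. by rewrite mul_col_mx mul_block_col !mul0mx addr0 add0r U_mul_Phi W_mul_Phi. Qed.

Lemma char_poly_A : char_poly A = 'X^r + 1.
Proof.
by rewrite char_poly_companion // -?polyC1 ?monicXnaddC ?size_XnaddC //; lia.
Qed.

Lemma char_poly_D : char_poly D = qD.
Proof. exact: char_poly_companion qD_monic size_qD. Qed.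

Lemma char_poly_T : char_poly T = ('X + 1) * ('X^6 - 'X^3 + 1) * ('X^r + 1).
Proof. by rewrite char_poly_block_diag char_poly_A char_poly_D qDE mulrC. Qed.

Lemma A_exp_eq1 m : A ^+ m = 1 <-> (2 * r %| m)%N.
Proof.
have r_gt0 : (0 < r)%N by lia.
apply: (@exp_eq1_iff_of_exp_eqN1 _ _ _ _ (Ordinal r_gt0)) => //.
- by apply: (@exp_eqN1_of_char_poly_mul _ _ _ _ 1); rewrite mulr1 char_poly_A.
- lia.
- by move=> s s_range; rewrite companion_exp_entry //=; [rewrite gtn_eqF | ]; lia.
Qed.

Lemma D_exp_eq1 m : D ^+ m = 1 <-> (18 %| m)%N.
Proof.
apply: (@exp_eq1_iff_of_exp_eqN1 _ _ 9 _ ord0) => //.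
- apply: (@exp_eqN1_of_char_poly_mul _ _ _ _ ('X^2 - 'X + 1)).
  by rewrite char_poly_D qDE; ring.
- by move=> s s_range; rewrite companion_exp_entry //=; [rewrite gtn_eqF | ]; lia.
Qed.

Lemma T_exp_eq1 m : T ^+ m = 1 <-> (lcmn (2 * r) 9 %| m)%N.
Proof.
rewrite exp_block_diag block_diag_eq1 A_exp_eq1 D_exp_eq1 dvdn_lcm.
rewrite -[18%N]/(2 * 9)%N [(2 * 9 %| m)%N]Gauss_dvd //.
split=> [[-> /andP[_ ->]] //|/andP[dvd_2r_m dvd_9_m]].
by rewrite dvd_2r_m dvd_9_m (dvdn_trans _ dvd_2r_m) ?dvdn_mulr.
Qed.

Definition coord_pos (l : nat) : nat := nth 0%N [:: 0; 2; 5; r + 1; r + 3; r + 4; r + 6]%N l.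
Definition Ecoord : 'M[int]_(7, r + 7) := \matrix_(l, j) ind (j == coord_pos l :> nat).
Definition UE : 'M[int]_(r + 7) := col_mx U Ecoord.

Definition P_entry (j l : nat) : int :=
  ind ((l == r - j) && ((7 <= j) && (j < r)))%N + ind ((l == r - 1) && (j == 1))%N
  - ind ((l == r - 3) && (j == 3))%N - ind ((l == r - 4) && (j == 4))%N
  + ind ((l == r - 6) && (j == 6))%N + ind ((l == r - 2) && (j == r + 2))%N
  - ind ((l == r - 5) && (j == r + 5))%N + ind ((l == 0) && (j == r))%N.

Definition Q_entry (j l : nat) : int :=
  ind ((l == 0) && (j == 0))%N + ind ((l == 0) && (j == r))%N + ind ((l == 1) && (j == 2))%N
  + ind ((l == 2) && (j == 5))%N + ind ((l == 3) && (j == r + 1))%N + ind ((l == 4) && (j == 3))%N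
  + ind ((l == 4) && (j == r + 3))%N + ind ((l == 5) && (j == r + 4))%N
  + ind ((l == 6) && (j == 6))%N + ind ((l == 6) && (j == r + 6))%N.

Definition P : 'M[int]_(r + 7, r) := \matrix_(j, l) P_entry j l.
Definition Q : 'M[int]_(r + 7, 7) := \matrix_(j, l) Q_entry j l.

Lemma PQ_mul_UE : row_mx P Q *m UE = 1.
Proof.
have u_r1 b : u (r - 1) b = ind (b == 1)%N by rewrite /u; case_lia.
have u_r2 b : u (r - 2) b = ind (b == r + 2)%N by rewrite /u; case_lia.
have u_r3 b : u (r - 3) b = ind (b == r + 3)%N - ind (b == 3)%N by rewrite /u; case_lia.
have u_r4 b : u (r - 4) b = - ind (b == 4)%N by rewrite /u; case_lia.
have u_r5 b : u (r - 5) b = - ind (b == r + 5)%N by rewrite /u; case_lia.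
have u_r6 b : u (r - 6) b = ind (b == 6)%N - ind (b == r + 6)%N by rewrite /u; case_lia.
have u_rsub a b : (if [&& (r - a < r)%N, (6 < a)%N & (a < r)%N] then u (r - a) b else 0)
    = ind [&& (6 < a)%N, (a < r)%N & (b == a)%N] by rewrite /u; case_lia.
rewrite mul_row_col; apply/matrixP => i j; rewrite [LHS]mxE.
rewrite (@mul_matrix_entry _ _ _ P_entry u) /P_entry.
rewrite (@mul_matrix_entry _ _ _ Q_entry (fun l j => ind (j == coord_pos l)%N)) /Q_entry.
under eq_bigr do rewrite !(mulrDl, mulrBl, mulNr).
under [X in _ + X]eq_bigr do rewrite !(mulrDl, mulrBl, mulNr).
rewrite !(big_split, sumrB, sumrN) /= !(sum_ind_mul _ (fun l => u l j)).
rewrite !(sum_ind_mul _ (fun l => ind ((j : nat) == coord_pos l)%N)) /coord_pos /=.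
rewrite -idmxE !mxE natr_ind -val_eqE /=.
have := ltn_ord i; have := ltn_ord j; move: (nat_of_ord i) (nat_of_ord j) => a b lt_a lt_b.
by rewrite u_rsub u_r1 u_r2 u_r3 u_r4 u_r5 u_r6 /u /=; case_lia_free_of b; case_lia.
Qed.

Lemma W_mul_Q : W *m Q = WQ.
Proof.
apply/matrixP => k l; rewrite (@mul_matrix_entry _ _ _ w Q_entry) /Q_entry.
under eq_bigr do rewrite !mulrDr.
rewrite !big_split /= !(sum_mul_indC _ (w k)) mxE.
case: k => [[|[|[|[|[|[|[|k]]]]]]] lt_k] //; case: l => [[|[|[|[|[|[|[|l]]]]]]] lt_l] //;
  rewrite /w /=; case_lia.
Qed.

Lemma det_B_neq0 : \det B != 0.
Proof.
have UE_PQ : UE *m row_mx P Q = 1 by apply: mulmx1C; rewrite PQ_mul_UE.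
move: UE_PQ; rewrite mul_col_row -idmxE (scalar_mx_block r 7) => /eq_block_mx[UP1 UQ0 _ _].
(* B *m row_mx P Q is block lower triangular with diagonal blocks 1 and WQ. *)
apply: contraNneq det_WQ_neq0 => detB0.
have : \det (B *m row_mx P Q) = 0 by rewrite det_mulmx detB0 mul0r.
by rewrite /B mul_col_row UP1 UQ0 det_lblock det1 mul1r W_mul_Q => ->.
Qed.

End Nakayama.

Theorem proposition6p1 (r : nat) (hr : (9 <= r)%N) :
  coxeter_poly (nakayama_cartan (r + 7) r)
    = ('X + 1) * ('X^6 - 'X^3 + 1) * ('X^r + 1)
  /\ is_coxeter_number (nakayama_cartan (r + 7) r) (lcmn (2 * r) 9).
Proof.
have B_Phi := B_mul_Phi hr; have detB := det_B_neq0 hr.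
rewrite /coxeter_poly coxeter_mx_nakayama //; split.
  by rewrite (char_poly_intertwined B_Phi detB) char_poly_T.
apply: is_coxeter_number_of_exp_eq1 => [|k]; first by rewrite lcmn_gt0 muln_gt0 /=; lia.
by rewrite coxeter_mx_nakayama // (exp_eq1_intertwined B_Phi detB) T_exp_eq1.
Qed.
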